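(* Let $\mathds J=[0,\infty)$, $n\ge2$, $1\le k\le n-1$, and consider \[ \begin{bmatrix}\dot x_1(t)\\ \dot x_2(t)\end{bmatrix}=\begin{bmatrix}B_{11}(t) & B_{12}(t)\\ 0 & B_{22}(t)\end{bmatrix}\begin{bmatrix}x_1(t)\\ x_2(t)\end{bmatrix}, \] where $B_{11}(t)$, $B_{12}(t)$, $B_{22}(t)$ are continuous, uniformly bounded matrix functions on $\mathds J$ of dimensions $(n-k)\times(n-k)$, $(n-k)\times k$, $k\times k$. Assume that $\dot x_1(t)=B_{11}(t)x_1(t)$ has an exponential dichotomy on $\mathds J$ with projection $P_1=0$, and $\dot x_2(t)=B_{22}(t)x_2(t)$ has an exponential dichotomy on $\mathds J$ with projection $P_2=I_k$. Then the full system $\dot x(t)=B(t)x(t)$ has an exponential dichotomy on $\mathds J$ with projection $P=\begin{bmatrix}0&0\\0&I_k\end{bmatrix}$. Moreover, it is reducible to block diagonal form with dimension $k$ in such a way that the resulting block diagonal coefficient matrix $D(t)=\mathrm{diag}(D_1(t),D_2(t))$ ($D_2(t)$ of size $k\times k$) satisfies $D_1(t)=B_{11}(t)$.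
   Context: Exponential dichotomy of $\dot x=A(t)x$ on $\mathds J$ with projection $P$ ($P^2=P$): there exist $K\ge1$, $\alpha>0$ and a nonsingular fundamental matrix solution $X(t)$ of $\dot X=AX$ with $\|X(t)PX^{-1}(t_0)\|\le Ke^{-\alpha(t-t_0)}$ for $t\ge t_0\ge0$ and $\|X(t)(I-P)X^{-1}(t_0)\|\le Ke^{\alpha(t-t_0)}$ for $0\le t\le t_0$. A Lyapunov transformation is a smooth invertible change of coordinates $x(t)=S(t)z(t)$ with $S(t)$, $S^{-1}(t)$ and $\dot S(t)$ uniformly bounded on $\mathds J$; it transforms $\dot x=A(t)x$ into $\dot z=[S^{-1}(t)A(t)S(t)-S^{-1}(t)\dot S(t)]z$. The system $\dot x=A(t)x$ is reducible to block diagonal form with dimension $k$ if there is a Lyapunov transformation $x=S(t)z$ transforming it into $\dot z=D(t)z$ with $D(t)=\begin{bmatrix}D_1(t)&0\\0&D_2(t)\end{bmatrix}$, $D_2(t)$ a $k\times k$ matrix. *)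

From HB Require Import structures.
From mathcomp Require Import all_boot all_order all_algebra.
From mathcomp Require Import all_classical all_reals all_analysis.
Set Implicit Arguments. Unset Strict Implicit. Unset Printing Implicit Defensive.
Import Order.TTheory GRing.Theory Num.Theory.
Import numFieldNormedType.Exports.
Local Open Scope classical_set_scope.
Local Open Scope ring_scope.

Definition Jhalf (R : realType) : set R := `[0, +oo[.
Arguments Jhalf R : clear implicits.

Definition fundamental_on_J (R : realType) (n : nat)
  (A X : R -> 'M[R]_n) : Prop :=
  {within Jhalf R, continuous X} /\
  (forall t : R, 0 < t -> is_derive t 1 X (A t *m X t)) /\
  (forall t : R, 0 <= t -> X t \in unitmx).

Definition exp_dichotomy (R : realType) (n : nat)
  (A : R -> 'M[R]_n) (P : 'M[R]_n) : Prop :=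
  P *m P = P /\
  exists (K alpha : R) (X : R -> 'M[R]_n),
    1 <= K /\ 0 < alpha /\ fundamental_on_J A X /\
    (forall t t0 : R, 0 <= t0 -> t0 <= t ->
       `|X t *m P *m invmx (X t0)| <= K * expR (- alpha * (t - t0))) /\
    (forall t t0 : R, 0 <= t -> t <= t0 ->
       `|X t *m (1%:M - P) *m invmx (X t0)| <= K * expR (alpha * (t - t0))).

Definition lyapunov_transf (R : realType) (n : nat)
  (S dS : R -> 'M[R]_n) : Prop :=
  {within Jhalf R, continuous S} /\
  {within Jhalf R, continuous dS} /\
  (forall t : R, 0 < t -> is_derive t 1 S (dS t)) /\
  (forall t : R, 0 <= t -> S t \in unitmx) /\
  exists M : R, forall t : R, 0 <= t ->
    `|S t| <= M /\ `|invmx (S t)| <= M /\ `|dS t| <= M.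

(* The matrix function transformed by x = S z:
   S^{-1} A S - S^{-1} S'. *)
Definition transformed_coef (R : realType) (n : nat)
  (A S dS : R -> 'M[R]_n) (t : R) : 'M[R]_n :=
  invmx (S t) *m A t *m S t - invmx (S t) *m dS t.

Definition unif_bounded_on_J (R : realType) (p q : nat)
  (F : R -> 'M[R]_(p, q)) : Prop :=
  exists M : R, forall t : R, 0 <= t -> `|F t| <= M.

From HB Require Import structures.
From mathcomp Require Import all_boot all_order all_algebra.
From mathcomp Require Import all_classical all_reals all_analysis.
From mathcomp Require Import ring lra.
Set Implicit Arguments. Unset Strict Implicit. Unset Printing Implicit Defensive.
Import Order.TTheory GRing.Theory Num.Theory.
Import numFieldNormedType.Exports.
Local Open Scope classical_set_scope.
Local Open Scope ring_scope.

(* Let X1, X2 be fundamental matrices of the diagonal blocks: X1 contracts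
   backwards in time (P1 = 0) and X2 contracts forwards (P2 = I).  The Sylvester
   equation H' = B11 H + B12 - H B22 then has the bounded solution
     H(t) = - \int_t^oo X1(t) X1(s)^-1 B12(s) X2(s) X2(t)^-1 ds,
   whose integrand decays like exp(-a (s - t)); it is written below as
   X1(t) (Phi(t) - L) X2(t)^-1, with Phi an antiderivative of X1^-1 B12 X2 and L
   its limit at +oo.  The unitriangular change of variables S = [1 H; 0 1] is a
   Lyapunov transformation taking B to diag(B11, B22), which has an exponential
   dichotomy with projection diag(0, I), and exponential dichotomies are
   transported by Lyapunov transformations. *)

Section MatrixNorm.
Context {R : realType}.

Lemma normr_mx_entry m n (A : 'M[R]_(m, n)) i j : `|A i j| <= `|A|.
Proof.
rewrite [leRHS]/Num.Def.normr /= mx_normrE.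
exact: le_trans (le_bigmax _ _ (i, j)).
Qed.

Lemma normr_mx_le m n (A : 'M[R]_(m, n)) (c : R) :
  0 <= c -> (forall i j, `|A i j| <= c) -> `|A| <= c.
Proof.
move=> c0 Ac; rewrite [leLHS]/Num.Def.normr /= mx_normrE.
by apply: bigmax_le => // -[i j] _; exact: Ac.
Qed.

Lemma normr_mulmx_le m n p (A : 'M[R]_(m, n)) (B : 'M[R]_(n, p)) a b :
  `|A| <= a -> `|B| <= b -> `|A *m B| <= n%:R * a * b.
Proof.
move=> Aa Bb; have a0 := le_trans (normr_ge0 A) Aa.
apply: normr_mx_le => [|i j]; first by rewrite !mulr_ge0 // (le_trans _ Bb).
rewrite mxE; apply: le_trans (ler_norm_sum _ _ _) _.
have -> : n%:R * a * b = \sum_(l < n) (a * b).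
  by rewrite sumr_const card_ord -mulrA mulr_natl.
apply: ler_sum => l _; rewrite normrM.
by apply: ler_pM => //; apply: le_trans (normr_mx_entry _ _ _) _.
Qed.

Lemma normr_block_mx_le m1 m2 n1 n2 (a : 'M[R]_(m1, n1)) (b : 'M[R]_(m1, n2))
    (c : 'M[R]_(m2, n1)) (d : 'M[R]_(m2, n2)) :
  `|block_mx a b c d| <= `|a| + `|b| + `|c| + `|d|.
Proof.
apply: normr_mx_le => [|i j]; first by rewrite !addr_ge0.
rewrite block_mxEh mxE.
case: splitP => i' _; rewrite mxE; case: splitP => j' _; rewrite ?mxE.
all: apply: le_trans (normr_mx_entry _ _ _) _.
all: by have := normr_ge0 a; have := normr_ge0 b; have := normr_ge0 c;
  have := normr_ge0 d; lra.
Qed.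

Lemma normr_block_diag_le m n (a : 'M[R]_m) (d : 'M[R]_n) :
  `|block_mx a 0 0 d| <= `|a| + `|d|.
Proof. by apply: le_trans (normr_block_mx_le _ _ _ _) _; rewrite !normr0 !addr0. Qed.

Lemma normr_scalar1_le n : `|(1%:M : 'M[R]_n)| <= 1.
Proof.
by apply: normr_mx_le => // i j; rewrite mxE; case: (i == j); rewrite ?normr1 ?normr0.
Qed.

Lemma normr_unitriangular_le m k (H : 'M[R]_(m, k)) :
  `|block_mx 1%:M H 0 1%:M| <= 2 + `|H|.
Proof.
apply: le_trans (normr_block_mx_le _ _ _ _) _; rewrite normr0 addr0.
by have := @normr_scalar1_le m; have := @normr_scalar1_le k; lra.
Qed.

End MatrixNorm.

Section MatrixInverse.
Context {R : comUnitRingType}.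

Lemma mulmx1_invmx n (A B : 'M[R]_n) : A *m B = 1%:M -> invmx A = B.
Proof.
move=> AB; have [uA _] := mulmx1_unit AB.
by rewrite -[invmx A]mulmx1 -AB mulmxA mulVmx // mul1mx.
Qed.

Lemma invmx_mulmx n (A B : 'M[R]_n) : A \in unitmx -> B \in unitmx ->
  invmx (A *m B) = invmx B *m invmx A.
Proof.
move=> uA uB; apply: mulmx1_invmx.
by rewrite mulmxA -(mulmxA A) mulmxV // mulmx1 mulmxV.
Qed.

Lemma unitriangular_mulmx m k (H : 'M[R]_(m, k)) :
  block_mx 1%:M H 0 1%:M *m block_mx 1%:M (- H) 0 1%:M = 1%:M.
Proof.
rewrite mulmx_block !mulmx0 !mul0mx !mulmx1 !mul1mx !addr0 !add0r.
by rewrite addNr -scalar_mx_block.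
Qed.

Lemma invmx_unitriangular m k (H : 'M[R]_(m, k)) :
  invmx (block_mx 1%:M H 0 1%:M) = block_mx 1%:M (- H) 0 1%:M.
Proof. exact/mulmx1_invmx/unitriangular_mulmx. Qed.

Lemma unitriangular_unitmx m k (H : 'M[R]_(m, k)) :
  block_mx 1%:M H 0 1%:M \in unitmx.
Proof. exact: (mulmx1_unit (unitriangular_mulmx H)).1. Qed.

Lemma unitriangular_conj m k (b11 : 'M[R]_m) (b12 h : 'M[R]_(m, k)) (b22 : 'M[R]_k) :
  let S := block_mx 1%:M h 0 1%:M in
  invmx S *m block_mx b11 b12 0 b22 *m S
    - invmx S *m block_mx 0 (b11 *m h + b12 - h *m b22) 0 0
  = block_mx b11 0 0 b22.
Proof.
rewrite /= invmx_unitriangular !mulmx_block !mulmx0 !mul0mx !mulmx1 !mul1mx.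
rewrite !addr0 !add0r opp_block_mx add_block_mx !oppr0 !addr0 mul0mx add0r.
by congr block_mx; rewrite mulNmx [X in X - _]addrA subrr.
Qed.

End MatrixInverse.

Section MatrixLimits.
Context {R : realType} {T : Type} (F : set_system T) {FF : Filter F}.

Lemma cvg_mx_entryP m n (f : T -> 'M[R]_(m, n)) (A : 'M[R]_(m, n)) :
  f @ F --> A <-> forall i j, (fun x => f x i j) @ F --> A i j.
Proof.
split=> [/cvgrPdist_le fA i j|fA].
  apply/cvgrPdist_le => e e0; apply: filterS (fA e e0) => x.
  by apply: le_trans; have := normr_mx_entry (A - f x) i j; rewrite !mxE.
apply/cvgrPdist_le => e e0.
have : \forall x \near F, forall ij : 'I_m * 'I_n,
    `|A ij.1 ij.2 - f x ij.1 ij.2| <= e.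
  by apply: filter_forall => ij; exact: (cvgrPdist_le _ _).1 (fA ij.1 ij.2) e e0.
apply: filterS => x fxA; apply: normr_mx_le (ltW e0) _ => i j.
by rewrite !mxE; exact: (fxA (i, j)).
Qed.

Lemma cvg_mulmx m n p (f : T -> 'M[R]_(m, n)) (g : T -> 'M[R]_(n, p))
    (A : 'M[R]_(m, n)) (B : 'M[R]_(n, p)) :
  f @ F --> A -> g @ F --> B -> (fun x => f x *m g x) @ F --> A *m B.
Proof.
move=> /cvg_mx_entryP fA /cvg_mx_entryP gB; apply/cvg_mx_entryP => i j.
rewrite mxE; under eq_fun do rewrite mxE.
by apply: cvg_big => [|l _]; [exact: add_continuous | exact: cvgM].
Qed.

Lemma cvg_det n (f : T -> 'M[R]_n) (A : 'M[R]_n) :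
  f @ F --> A -> (fun x => \det (f x)) @ F --> \det A.
Proof.
move=> /cvg_mx_entryP fA; apply: cvg_big => [|s _]; first exact: add_continuous.
apply: cvgM; first exact: cvg_cst.
by apply: cvg_big => [|i _]; [exact: mul_continuous | exact: fA].
Qed.

Lemma cvg_invmx n (f : T -> 'M[R]_n) (A : 'M[R]_n) :
  A \in unitmx -> f @ F --> A -> (fun x => invmx (f x)) @ F --> invmx A.
Proof.
move=> uA fA; have dA : \det A != 0 by rewrite -unitfE -unitmxE.
have dfA := cvg_det fA.
have E : {near F, (fun x => (\det (f x))^-1 *: \adj (f x)) =1 invmx \o f}.
  near=> x; rewrite /= /invmx unitmxE unitfE ifT //.
  by near: x; exact: cvgr_neq0 dfA dA.
apply: cvg_trans (near_eq_cvg E) _; rewrite /invmx uA.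
apply/cvg_mx_entryP => i j; rewrite mxE; under eq_fun do rewrite mxE.
apply: cvgM; first exact: cvgV dA dfA.
rewrite !mxE; under eq_fun do rewrite !mxE.
apply: cvgM; first exact: cvg_cst.
apply: cvg_det; apply/cvg_mx_entryP => a b.
rewrite !mxE; under eq_fun do rewrite !mxE.
by move/cvg_mx_entryP: fA; apply.
Unshelve. all: by end_near. Qed.

Lemma cvg_block_mx m1 m2 n1 n2 (a : T -> 'M[R]_(m1, n1)) (b : T -> 'M[R]_(m1, n2))
    (c : T -> 'M[R]_(m2, n1)) (d : T -> 'M[R]_(m2, n2))
    (a0 : 'M[R]_(m1, n1)) (b0 : 'M[R]_(m1, n2))
    (c0 : 'M[R]_(m2, n1)) (d0 : 'M[R]_(m2, n2)) :
  a @ F --> a0 -> b @ F --> b0 -> c @ F --> c0 -> d @ F --> d0 ->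
  (fun x => block_mx (a x) (b x) (c x) (d x)) @ F --> block_mx a0 b0 c0 d0.
Proof.
move=> /cvg_mx_entryP ha /cvg_mx_entryP hb /cvg_mx_entryP hc /cvg_mx_entryP hd.
apply/cvg_mx_entryP => i j.
rewrite block_mxEh mxE; under eq_fun do rewrite block_mxEh mxE.
case: splitP => i' _; rewrite mxE; under eq_fun do rewrite mxE;
  case: splitP => j' _; rewrite ?mxE; under eq_fun do rewrite ?mxE.
all: by [apply: ha | apply: hb | apply: hc | apply: hd].
Qed.

End MatrixLimits.

Section WithinContinuous.
Context {R : realType} {T : topologicalType} (A : set T).

Lemma continuous_withinP {U : topologicalType} (f : T -> U) :
  {within A, continuous f} <->
  (forall x, A x -> f @ within A (nbhs x) --> f x).
Proof. by rewrite subspace_continuousP. Qed.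

Lemma continuous_within_cst {U : topologicalType} (u : U) :
  {within A, continuous (fun _ : T => u)}.
Proof. by apply/continuous_withinP => x _; exact: cvg_cst. Qed.

Lemma continuous_within_add m n (f g : T -> 'M[R]_(m, n)) :
  {within A, continuous f} -> {within A, continuous g} ->
  {within A, continuous (fun x => f x + g x)}.
Proof.
move=> /continuous_withinP fc /continuous_withinP gc.
by apply/continuous_withinP => x Ax; exact: cvgD (fc x Ax) (gc x Ax).
Qed.

Lemma continuous_within_opp m n (f : T -> 'M[R]_(m, n)) :
  {within A, continuous f} -> {within A, continuous (fun x => - f x)}.
Proof.
move=> /continuous_withinP fc.
by apply/continuous_withinP => x Ax; exact: cvgN (fc x Ax).
Qed.

Lemma continuous_within_mulmx m n p (f : T -> 'M[R]_(m, n)) (g : T -> 'M[R]_(n, p)) :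
  {within A, continuous f} -> {within A, continuous g} ->
  {within A, continuous (fun x => f x *m g x)}.
Proof.
move=> /continuous_withinP fc /continuous_withinP gc.
by apply/continuous_withinP => x Ax; exact: cvg_mulmx (fc x Ax) (gc x Ax).
Qed.

Lemma continuous_within_invmx n (f : T -> 'M[R]_n) :
  (forall x, A x -> f x \in unitmx) ->
  {within A, continuous f} -> {within A, continuous (fun x => invmx (f x))}.
Proof.
move=> fu /continuous_withinP fc.
by apply/continuous_withinP => x Ax; exact: cvg_invmx (fu x Ax) (fc x Ax).
Qed.

Lemma continuous_within_block_mx m1 m2 n1 n2
    (a : T -> 'M[R]_(m1, n1)) (b : T -> 'M[R]_(m1, n2))
    (c : T -> 'M[R]_(m2, n1)) (d : T -> 'M[R]_(m2, n2)) :
  {within A, continuous a} -> {within A, continuous b} ->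
  {within A, continuous c} -> {within A, continuous d} ->
  {within A, continuous (fun x => block_mx (a x) (b x) (c x) (d x))}.
Proof.
move=> /continuous_withinP ac /continuous_withinP bc /continuous_withinP cc
  /continuous_withinP dc; apply/continuous_withinP => x Ax.
exact: cvg_block_mx (ac x Ax) (bc x Ax) (cc x Ax) (dc x Ax).
Qed.

End WithinContinuous.

Section MatrixDerivatives.
Context {R : realType}.

Lemma is_derive_cvgP {V : normedModType R} (f : R -> V) (t : R) (l : V) :
  is_derive t 1 f l <->
  (fun h => h^-1 *: ((f \o shift t) (h *: 1) - f t)) @ 0^' --> l.
Proof.
split=> [[fd <-] //|fl].
by apply: DeriveDef; [apply/cvg_ex; exists l | exact: cvg_lim fl].
Qed.

Lemma is_derive_mx_entryP m n (f : R -> 'M[R]_(m, n)) (t : R) (D : 'M[R]_(m, n)) :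
  is_derive t 1 f D <-> forall i j, is_derive t 1 (fun x => f x i j) (D i j).
Proof.
rewrite is_derive_cvgP cvg_mx_entryP.
split=> fD i j.
  apply/is_derive_cvgP; apply: cvg_trans (fD i j).
  by apply: near_eq_cvg; near=> h; rewrite !mxE.
have /is_derive_cvgP := fD i j; apply: cvg_trans.
by apply: near_eq_cvg; near=> h; rewrite !mxE.
Unshelve. all: by end_near. Qed.

Lemma is_derive_mulmx m n p (f : R -> 'M[R]_(m, n)) (g : R -> 'M[R]_(n, p)) (t : R)
    (df : 'M[R]_(m, n)) (dg : 'M[R]_(n, p)) :
  is_derive t 1 f df -> is_derive t 1 g dg ->
  is_derive t 1 (fun x => f x *m g x) (df *m g t + f t *m dg).
Proof.
move=> /is_derive_mx_entryP fd /is_derive_mx_entryP gd.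
apply/is_derive_mx_entryP => i j.
have -> : (fun x => (f x *m g x) i j) =
    \sum_(l < n) ((fun x => f x i l) * (fun x => g x l j)).
  by apply/funext => x; rewrite mxE fct_sumE.
apply: is_derive_eq; rewrite !mxE -big_split /=; apply: eq_bigr => l _.
by rewrite /GRing.scale /= addrC mulrC [X in _ + X]mulrC.
Qed.

Lemma is_derive_invmx n (f : R -> 'M[R]_n) (t : R) (df : 'M[R]_n) :
  f t \in unitmx -> is_derive t 1 f df ->
  is_derive t 1 (fun x => invmx (f x)) (- (invmx (f t) *m df *m invmx (f t))).
Proof.
move=> ft fd; have dft := (is_derive_cvgP f t df).1 fd.
have shift0 : (fun h : R => h *: 1 + t) @ 0^' --> t.
  apply/cvgrPdist_le => e e0; near=> h.
  rewrite opprD addrCA subrr addr0 normrN normrZ normr1 mulr1.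
  by near: h; exact: dnbhs0_le.
have fc : (fun h : R => f (h *: 1 + t)) @ 0^' --> f t.
  have fct : f @ t --> f t.
    by apply: differentiable_continuous; apply/derivable1_diffP; case: fd.
  exact: cvg_comp shift0 fct.
have fu : \forall h \near 0^', f (h *: 1 + t) \in unitmx.
  near=> h; rewrite unitmxE unitfE; near: h.
  by apply: cvgr_neq0 (cvg_det fc) _; rewrite -unitfE -unitmxE.
apply/is_derive_cvgP.
have E : {near 0^', (fun h : R => - (invmx (f (h *: 1 + t)) *m
     (h^-1 *: ((f \o shift t) (h *: 1) - f t)) *m invmx (f t))) =1
   (fun h => h^-1 *: (((fun x => invmx (f x)) \o shift t) (h *: 1) - invmx (f t)))}.
  apply: filterS fu => h hu /=.
  rewrite -scalemxAr -scalemxAl mulmxBr mulmxBl mulVmx // mul1mx.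
  by rewrite -mulmxA mulmxV // mulmx1 -scalerN opprB.
apply: cvg_trans (near_eq_cvg E) _.
apply: cvgN; apply: cvg_mulmx (cvg_cst _).
exact: cvg_mulmx (cvg_invmx ft fc) dft.
Unshelve. all: by end_near. Qed.

Lemma is_derive_block_mx m1 m2 n1 n2
    (a : R -> 'M[R]_(m1, n1)) (b : R -> 'M[R]_(m1, n2))
    (c : R -> 'M[R]_(m2, n1)) (d : R -> 'M[R]_(m2, n2)) (t : R)
    (a0 : 'M[R]_(m1, n1)) (b0 : 'M[R]_(m1, n2))
    (c0 : 'M[R]_(m2, n1)) (d0 : 'M[R]_(m2, n2)) :
  is_derive t 1 a a0 -> is_derive t 1 b b0 ->
  is_derive t 1 c c0 -> is_derive t 1 d d0 ->
  is_derive t 1 (fun x => block_mx (a x) (b x) (c x) (d x)) (block_mx a0 b0 c0 d0).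
Proof.
move=> /is_derive_mx_entryP ad /is_derive_mx_entryP bd
  /is_derive_mx_entryP cd /is_derive_mx_entryP dd.
apply/is_derive_mx_entryP => i j.
rewrite block_mxEh mxE; under eq_fun do rewrite block_mxEh mxE.
case: splitP => i' _; rewrite mxE; under eq_fun do rewrite mxE;
  case: splitP => j' _; rewrite ?mxE; under eq_fun do rewrite ?mxE.
all: by [apply: ad | apply: bd | apply: cd | apply: dd].
Qed.

End MatrixDerivatives.

Section HalfLine.
Context {R : realType}.
Local Notation J := (Jhalf R).

Lemma JhalfE (x : R) : J x = (0 <= x).
Proof. by rewrite /Jhalf /= in_itv /= andbT. Qed.

Lemma derivable_continuous_J {V : normedModType R} (f : R -> V) :
  (forall x, 0 <= x -> derivable f x 1) -> {within J, continuous f}.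
Proof.
move=> fd; apply: derivable_within_continuous => x.
by rewrite in_itv /= andbT; exact: fd.
Qed.

Lemma continuous_J_max0 {U : topologicalType} (f : R -> U) :
  {within J, continuous f} -> continuous (fun x : R => f (Num.max x 0)).
Proof.
move=> /continuous_withinP fc x.
have maxJ (y : R) : J (Num.max y 0) by rewrite JhalfE le_max lexx orbT.
have cm : (fun y : R => Num.max y 0) @ x --> Num.max x 0.
  exact: (@continuous_max R R id (cst 0) x (@cvg_id _ _) (cvg_cst 0)).
have cmJ : (fun y : R => Num.max y 0) @ x --> within J (nbhs (Num.max x 0)).
  move=> P JP.
  apply: (@filterS _ (nbhs x) _ (fun y => J (Num.max y 0) -> P (Num.max y 0))).
    by move=> y; apply; exact: maxJ.
  exact: cm JP.
exact: cvg_comp cmJ (fc _ (maxJ x)).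
Qed.

Lemma continuous_J_antiderivative (f : R -> R) : {within J, continuous f} ->
  exists F : R -> R, forall x : R, 0 <= x -> is_derive x 1 F (f x).
Proof.
(* Integrating from -1 puts every x in J in the interior of the domain of
   integration, as the FTC requires; f is extended to the left by f 0. *)
move=> /continuous_J_max0 gc; set g := fun x => f (Num.max x 0) in gc.
exists (fun x => (\int[lebesgue_measure]_(t in [set` `[(-1 : R), x]]) g t)%R) => x x0.
have intg : lebesgue_measure.-integrable `[(-1 : R), x + 1] (EFin \o g).
  apply: continuous_compact_integrable; first exact: segment_compact.
  exact: continuous_subspaceT.
have x1 : x < x + 1 by rewrite ltrDl.
have Nx : -1 < x by apply: lt_le_trans x0; rewrite ltrN10.
have [gd gdx] := continuous_FTC1_closed x1 intg Nx (gc x).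
by apply: DeriveDef => //; rewrite -derive1E gdx /g max_l.
Qed.

Lemma continuous_J_antiderivative_mx m n (f : R -> 'M[R]_(m, n)) :
  {within J, continuous f} ->
  exists F : R -> 'M[R]_(m, n), forall x : R, 0 <= x -> is_derive x 1 F (f x).
Proof.
move=> /continuous_withinP fc.
have entry (ij : 'I_m * 'I_n) : exists F : R -> R,
    forall x : R, 0 <= x -> is_derive x 1 F (f x ij.1 ij.2).
  apply: continuous_J_antiderivative; apply/continuous_withinP => x Jx.
  by move/cvg_mx_entryP: (fc x Jx); apply.
pose F ij := projT1 (cid (entry ij)).
exists (fun x => \matrix_(i, j) F (i, j) x) => x x0.
apply/is_derive_mx_entryP => i j.
under eq_fun do rewrite mxE.
exact: (projT2 (cid (entry (i, j))) x x0).
Qed.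

End HalfLine.

Section ExpDecayIncrement.
Context {R : realType}.

Lemma derive_nonpos_le (h dh : R -> R) (a b : R) : a <= b ->
  (forall x, a <= x -> x <= b -> is_derive x 1 h (dh x)) ->
  (forall x, a <= x -> x <= b -> dh x <= 0) -> h b <= h a.
Proof.
move=> ab hd dh0.
have itv x : x \in `]a, b[ -> a <= x /\ x <= b.
  by rewrite in_itv /= => /andP[/ltW ? /ltW ?].
apply: (@ler0_derive1_nincr _ _ a b) => //.
- by move=> x /itv[ax xb]; case: (hd x ax xb).
- by move=> x /itv[ax xb]; rewrite derive1E; have [_ ->] := hd x ax xb; exact: dh0.
apply: derivable_within_continuous => x.
by rewrite in_itv /= => /andP[ax xb]; case: (hd x ax xb).
Qed.

Lemma increment_le_dominating_derive (f df G dG : R -> R) (a b : R) : a <= b ->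
  (forall x, a <= x -> x <= b -> is_derive x 1 f (df x)) ->
  (forall x, a <= x -> x <= b -> is_derive x 1 G (dG x)) ->
  (forall x, a <= x -> x <= b -> `|df x| <= - dG x) ->
  `|f b - f a| <= G a - G b.
Proof.
move=> ab fd Gd dfG.
have up : f b + G b <= f a + G a.
  apply: (@derive_nonpos_le (f + G) (df \+ dG) a b) => // x ax xb.
    exact: is_deriveD (fd x ax xb) (Gd x ax xb).
  by have := ler_norm (df x); have := dfG x ax xb; rewrite /=; lra.
have down : G b - f b <= G a - f a.
  apply: (@derive_nonpos_le (G - f) (dG \- df) a b) => // x ax xb.
    exact: is_deriveB (Gd x ax xb) (fd x ax xb).
  by have := ler_norm (- df x); rewrite normrN; have := dfG x ax xb; rewrite /=; lra.
by rewrite ler_norml; apply/andP; split; lra.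
Qed.

Lemma increment_le_exp_decay (f df : R -> R) (a b C be : R) :
  a <= b -> 0 < be -> 0 <= C ->
  (forall x, a <= x -> x <= b -> is_derive x 1 f (df x)) ->
  (forall x, a <= x -> x <= b -> `|df x| <= C * expR (- be * (x - a))) ->
  `|f b - f a| <= C / be.
Proof.
move=> ab be0 C0 fd dfC.
pose e y := expR (- be * (y - a)).
have ed (y : R) : is_derive y 1 (fun x => C / be * e x) (- (C * e y)).
  have lin : is_derive y 1 (fun x : R => - be * (x - a)) (- be).
    have := is_deriveZ (- be) (is_deriveB (is_derive_id y 1) (is_derive_cst a y 1)).
    by rewrite subr0 /GRing.scale /= mulr1.
  have ey : is_derive y 1 e (e y * - be) := is_derive1_comp (is_derive_expR _) lin.
  apply: is_derive_eq (is_deriveZ (C / be) ey) _.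
  by rewrite /GRing.scale /=; field; rewrite gt_eqF.
apply: le_trans (increment_le_dominating_derive ab fd (fun x _ _ => ed x) _) _.
  by move=> x ax xb; rewrite opprK; exact: dfC.
rewrite /e subrr mulr0 expR0 mulr1 lerBlDr lerDl.
by rewrite mulr_ge0 ?divr_ge0 ?expR_ge0 // ltW.
Qed.

Lemma increment_le_exp_decay_mx m n (f df : R -> 'M[R]_(m, n)) (a b C be : R) :
  a <= b -> 0 < be -> 0 <= C ->
  (forall x, a <= x -> x <= b -> is_derive x 1 f (df x)) ->
  (forall x, a <= x -> x <= b -> `|df x| <= C * expR (- be * (x - a))) ->
  `|f b - f a| <= C / be.
Proof.
move=> ab be0 C0 fd dfC; apply: normr_mx_le => [|i j].
  by rewrite divr_ge0 // ltW.
rewrite !mxE.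
apply: (@increment_le_exp_decay (fun x => f x i j) (fun x => df x i j)) => // x ax xb.
  by move/is_derive_mx_entryP: (fd x ax xb); apply.
exact: le_trans (normr_mx_entry _ i j) (dfC x ax xb).
Qed.

End ExpDecayIncrement.

Section Dichotomy.
Context {R : realType}.

Lemma exp_bound_weaken (K1 K a1 a d : R) :
  0 <= K1 -> K1 <= K -> a <= a1 -> d <= 0 ->
  K1 * expR (a1 * d) <= K * expR (a * d).
Proof.
by move=> K10 K1K aa1 d0; apply: ler_pM; rewrite ?expR_ge0 // ler_expR; nra.
Qed.

Lemma fundamental_block_diag m k (A1 X1 : R -> 'M[R]_m) (A2 X2 : R -> 'M[R]_k) :
  fundamental_on_J A1 X1 -> fundamental_on_J A2 X2 ->
  fundamental_on_J (fun t => block_mx (A1 t) 0 0 (A2 t))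
    (fun t => block_mx (X1 t) 0 0 (X2 t)).
Proof.
move=> [X1c [X1d X1u]] [X2c [X2d X2u]]; split; [|split].
- by apply: continuous_within_block_mx => //; exact: continuous_within_cst.
- move=> t t0; apply: is_derive_eq.
    by apply: is_derive_block_mx; try exact: is_derive_cst; [exact: X1d | exact: X2d].
  by rewrite mulmx_block !mulmx0 !mul0mx !addr0 !add0r.
- by move=> t t0; rewrite block_diag_mx_unit X1u ?X2u.
Qed.

Lemma exp_dichotomy_block_diag m k (A1 : R -> 'M[R]_m) (A2 : R -> 'M[R]_k)
    (P1 : 'M[R]_m) (P2 : 'M[R]_k) :
  exp_dichotomy A1 P1 -> exp_dichotomy A2 P2 ->
  exp_dichotomy (fun t => block_mx (A1 t) 0 0 (A2 t)) (block_mx P1 0 0 P2).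
Proof.
move=> [P1P [K1 [a1 [X1 [K1ge [a1gt [X1f [X1s X1u]]]]]]]].
move=> [P2P [K2 [a2 [X2 [K2ge [a2gt [X2f [X2s X2u]]]]]]]].
set K := Num.max K1 K2; set a := Num.min a1 a2.
have K1K : K1 <= K by rewrite le_max lexx.
have K2K : K2 <= K by rewrite le_max lexx orbT.
have aa1 : a <= a1 by rewrite ge_min lexx.
have aa2 : a <= a2 by rewrite ge_min lexx orbT.
have K10 : 0 <= K1 by apply: le_trans K1ge.
have K20 : 0 <= K2 by apply: le_trans K2ge.
have [_ [_ X1unit]] := X1f; have [_ [_ X2unit]] := X2f.
have conj_diag (Q1 : 'M[R]_m) (Q2 : 'M[R]_k) t s : 0 <= s ->
    block_mx (X1 t) 0 0 (X2 t) *m block_mx Q1 0 0 Q2 *m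
      invmx (block_mx (X1 s) 0 0 (X2 s)) =
    block_mx (X1 t *m Q1 *m invmx (X1 s)) 0 0 (X2 t *m Q2 *m invmx (X2 s)).
  move=> s0; rewrite invmx_block_diag ?block_diag_mx_unit ?X1unit ?X2unit //.
  by rewrite !mulmx_block !(mulmx0, mul0mx, addr0, add0r).
split; first by rewrite mulmx_block !mulmx0 !mul0mx !addr0 !add0r P1P P2P.
exists (K + K), a, (fun t => block_mx (X1 t) 0 0 (X2 t)); split.
  by apply: le_trans K1ge (le_trans K1K _); rewrite lerDl (le_trans K10).
split; first by rewrite lt_min a1gt a2gt.
split; first exact: fundamental_block_diag.
split=> t s s0 ts.
  have ts0 : s - t <= 0 by rewrite subr_le0.
  rewrite conj_diag //; apply: le_trans (normr_block_diag_le _ _) _.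
  rewrite mulrDl mulNr -mulrN opprB.
  by apply: lerD; [apply: le_trans (X1s t s s0 ts) _ | apply: le_trans (X2s t s s0 ts) _];
    rewrite mulNr -mulrN opprB; exact: exp_bound_weaken.
have ts0 : t - s <= 0 by rewrite subr_le0.
rewrite [1%:M](scalar_mx_block m k) opp_block_mx add_block_mx !oppr0 !addr0.
rewrite conj_diag ?(le_trans s0 ts) //; apply: le_trans (normr_block_diag_le _ _) _.
by rewrite mulrDl; apply: lerD; [apply: le_trans (X1u t s s0 ts) _ |
  apply: le_trans (X2u t s s0 ts) _]; exact: exp_bound_weaken.
Qed.

Lemma exp_dichotomy_transform n (A D S dS : R -> 'M[R]_n) (P : 'M[R]_n) :
  lyapunov_transf S dS ->
  (forall t, 0 <= t -> transformed_coef A S dS t = D t) ->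
  exp_dichotomy D P -> exp_dichotomy A P.
Proof.
move=> [Sc [_ [Sd [Su [M SM]]]]] AD.
move=> [PP [K [a [Z [K1 [a0 [[Zc [Zd Zu]] [Zs Zn]]]]]]]].
have M0 : 0 <= M by apply: le_trans (SM 0 (lexx 0)).1.
have SD t : 0 <= t -> S t *m D t = A t *m S t - dS t.
  move=> t0; rewrite -AD // /transformed_coef mulmxBr !mulmxA.
  by rewrite !mulmxV ?Su // !mul1mx.
set KS := n%:R * (n%:R * M * K) * M.
have KS0 : 0 <= KS by rewrite !mulr_ge0 // (le_trans ler01).
have conj_bound (Q : 'M[R]_n) t s d : 0 <= t -> 0 <= s ->
    `|Z t *m Q *m invmx (Z s)| <= K * expR d ->
    `|S t *m Z t *m Q *m invmx (S s *m Z s)| <= (1 + KS) * expR d.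
  move=> t0 s0 ZQ.
  have -> : S t *m Z t *m Q *m invmx (S s *m Z s) =
      S t *m (Z t *m Q *m invmx (Z s)) *m invmx (S s).
    by rewrite invmx_mulmx ?Su ?Zu // !mulmxA.
  apply: le_trans (normr_mulmx_le (normr_mulmx_le (SM t t0).1 ZQ) (SM s s0).2.1) _.
  rewrite [leLHS](_ : _ = KS * expR d); last by rewrite /KS; ring.
  by rewrite ler_wpM2r ?expR_ge0 // lerDr.
split=> //; exists (1 + KS), a, (fun t => S t *m Z t); split.
  by rewrite lerDl.
split=> //; split.
  split; first exact: continuous_within_mulmx.
  split; last by move=> t t0; rewrite unitmx_mul Su ?Zu.
  move=> t t0; apply: is_derive_eq (is_derive_mulmx (Sd t t0) (Zd t t0)) _.
  by rewrite mulmxA SD 1?ltW // mulmxBl addrC subrK mulmxA.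
split=> t s s0 ts.
  exact: conj_bound (le_trans s0 ts) s0 (Zs t s s0 ts).
exact: conj_bound s0 (le_trans s0 ts) (Zn t s s0 ts).
Qed.

End Dichotomy.

Section UniformBounds.
Context {R : realType}.

Lemma unif_bounded_ge0 p q (F : R -> 'M[R]_(p, q)) :
  unif_bounded_on_J F -> exists2 M, 0 <= M & forall t : R, 0 <= t -> `|F t| <= M.
Proof. by move=> [M FM]; exists M => //; exact: le_trans (FM 0 (lexx 0)). Qed.

Lemma unif_bounded_add p q (F G : R -> 'M[R]_(p, q)) :
  unif_bounded_on_J F -> unif_bounded_on_J G -> unif_bounded_on_J (fun t => F t + G t).
Proof.
move=> [M FM] [N GN]; exists (M + N) => t t0.
by apply: le_trans (ler_normD _ _) _; exact: lerD (FM t t0) (GN t t0).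
Qed.

Lemma unif_bounded_opp p q (F : R -> 'M[R]_(p, q)) :
  unif_bounded_on_J F -> unif_bounded_on_J (fun t => - F t).
Proof. by move=> [M FM]; exists M => t t0; rewrite normrN; exact: FM. Qed.

Lemma unif_bounded_mulmx p q r (F : R -> 'M[R]_(p, q)) (G : R -> 'M[R]_(q, r)) :
  unif_bounded_on_J F -> unif_bounded_on_J G -> unif_bounded_on_J (fun t => F t *m G t).
Proof.
move=> [M FM] [N GN]; exists (q%:R * M * N) => t t0.
exact: normr_mulmx_le (FM t t0) (GN t t0).
Qed.

End UniformBounds.

Lemma lyapunov_transf_unitriangular (R : realType) m k (H dH : R -> 'M[R]_(m, k)) :
  {within Jhalf R, continuous H} -> {within Jhalf R, continuous dH} ->
  (forall t : R, 0 < t -> is_derive t 1 H (dH t)) ->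
  unif_bounded_on_J H -> unif_bounded_on_J dH ->
  lyapunov_transf (fun t => block_mx 1%:M (H t) 0 1%:M)
    (fun t => block_mx 0 (dH t) 0 0).
Proof.
move=> Hc dHc Hd /unif_bounded_ge0[M M0 HM] /unif_bounded_ge0[N N0 dHN].
split; first by apply: continuous_within_block_mx => //; exact: continuous_within_cst.
split; first by apply: continuous_within_block_mx => //; exact: continuous_within_cst.
split.
  by move=> t t0; apply: is_derive_block_mx; try exact: is_derive_cst; exact: Hd.
split; first by move=> t _; exact: unitriangular_unitmx.
exists (2 + M + N) => t t0; rewrite invmx_unitriangular.
split; [|split].
- apply: le_trans (normr_unitriangular_le _) _.
  by have := HM t t0; lra.
- apply: le_trans (normr_unitriangular_le _) _.
  by rewrite normrN; have := HM t t0; lra.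
- apply: le_trans (normr_block_mx_le _ _ _ _) _; rewrite !normr0 add0r !addr0.
  by have := dHN t t0; lra.
Qed.

Section ExpDichotomyBounds.
Context {R : realType} {n : nat} (A : R -> 'M[R]_n).

Lemma exp_dichotomy0_decay : exp_dichotomy A 0 ->
  exists K a (X : R -> 'M[R]_n), [/\ 0 < a, fundamental_on_J A X &
    forall t s : R, 0 <= t -> t <= s -> `|X t *m invmx (X s)| <= K * expR (- a * (s - t))].
Proof.
move=> [_ [K [a [X [K1 [a0 [Xf [_ Xu]]]]]]]].
exists K, a, X; split => // t s t0 ts; have := Xu t s t0 ts.
by rewrite subr0 mulmx1 mulNr -mulrN opprB.
Qed.

Lemma exp_dichotomy1_bounded : exp_dichotomy A 1%:M ->
  exists K (X : R -> 'M[R]_n), fundamental_on_J A X /\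
    forall t s : R, 0 <= s -> s <= t -> `|X t *m invmx (X s)| <= K.
Proof.
move=> [_ [K [a [X [K1 [a0 [Xf [Xs _]]]]]]]].
exists K, X; split => // t s s0 st; have := Xs t s s0 st.
rewrite mulmx1 => /le_trans; apply; rewrite ger_pMr ?(lt_le_trans ltr01) //.
rewrite expR_le1 mulNr oppr_le0.
by apply: mulr_ge0; [exact: ltW | rewrite subr_ge0].
Qed.

End ExpDichotomyBounds.

Lemma exp_decay_lt (R : realType) (c eps a : R) : 0 <= c -> 0 < eps -> 0 < a ->
  exists T, 0 <= T /\ c * expR (- a * T) < eps.
Proof.
move=> c0 e0 a0; set d := Num.min (eps / (c + 1)) 1.
have d0 : 0 < d by rewrite lt_min ltr01 andbT divr_gt0 // ltr_wpDl.
have [y ey] := expR_total d0.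
have y0 : y <= 0 by rewrite -expR_le1 ey ge_min lexx orbT.
exists (- y / a); split; first by rewrite divr_ge0 // ?oppr_ge0 // ltW.
rewrite (_ : - a * (- y / a) = y) ?ey; last by field; rewrite gt_eqF.
have : d <= eps / (c + 1) by rewrite ge_min lexx.
by rewrite ler_pdivlMr ?ltr_wpDl // => ?; nra.
Qed.

Section BoundedSylvesterSolution.
Context {R : realType} {m k : nat}.
Local Notation J := (Jhalf R).
Variables (B11 : R -> 'M[R]_m) (B12 : R -> 'M[R]_(m, k)) (B22 : R -> 'M[R]_k).
Variables (X1 : R -> 'M[R]_m) (X2 : R -> 'M[R]_k) (K1 K2 a M12 : R).
Hypothesis a_gt0 : 0 < a.
Hypothesis B12_cont : {within J, continuous B12}.
Hypothesis B12_bound : forall t : R, 0 <= t -> `|B12 t| <= M12.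
Hypothesis X1_fund : fundamental_on_J B11 X1.
Hypothesis X2_fund : fundamental_on_J B22 X2.
Hypothesis X1_decay : forall t s : R, 0 <= t -> t <= s ->
  `|X1 t *m invmx (X1 s)| <= K1 * expR (- a * (s - t)).
Hypothesis X2_bound : forall t s : R, 0 <= s -> s <= t ->
  `|X2 t *m invmx (X2 s)| <= K2.

Let X1_unit (t : R) : 0 <= t -> X1 t \in unitmx.
Proof. by case: X1_fund => _ [_]; apply. Qed.
Let X2_unit (t : R) : 0 <= t -> X2 t \in unitmx.
Proof. by case: X2_fund => _ [_]; apply. Qed.

Let forcing s := invmx (X1 s) *m B12 s *m X2 s.
Let kernel_const := k%:R * (m%:R * K1 * M12) * K2.

Let kernel_const_ge0 : 0 <= kernel_const.
Proof.
have K10 : 0 <= K1.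
  have := le_trans (normr_ge0 _) (X1_decay (lexx 0) (lexx 0)).
  by rewrite pmulr_lge0 // expR_gt0.
have K20 : 0 <= K2 by apply: le_trans (X2_bound (lexx 0) (lexx 0)).
have M120 : 0 <= M12 by apply: le_trans (B12_bound (lexx 0)).
by rewrite !mulr_ge0.
Qed.

Lemma sylvester_forcing_continuous : {within J, continuous forcing}.
Proof.
have [X1c [_ _]] := X1_fund; have [X2c [_ _]] := X2_fund.
apply: continuous_within_mulmx X2c; apply: continuous_within_mulmx B12_cont.
by apply: continuous_within_invmx X1c => t; rewrite JhalfE; exact: X1_unit.
Qed.

Lemma sylvester_kernel_decay (t x : R) : 0 <= t -> t <= x ->
  `|X1 t *m forcing x *m invmx (X2 t)| <= kernel_const * expR (- a * (x - t)).
Proof.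
move=> t0 tx; have x0 := le_trans t0 tx.
have -> : X1 t *m forcing x *m invmx (X2 t) =
    X1 t *m invmx (X1 x) *m B12 x *m (X2 x *m invmx (X2 t)) by rewrite !mulmxA.
apply: le_trans (normr_mulmx_le (normr_mulmx_le (X1_decay t0 tx) (B12_bound x0))
  (X2_bound t0 tx)) _.
by rewrite [leLHS](_ : _ = kernel_const * expR (- a * (x - t))) // /kernel_const; ring.
Qed.

Lemma sylvester_forcing_decay : exists C,
  forall s : R, 0 <= s -> `|forcing s| <= C * expR (- a * s).
Proof.
exists (k%:R * (m%:R * `|invmx (X1 0)| * kernel_const) * `|X2 0|) => s s0.
have := sylvester_kernel_decay (lexx 0) s0; rewrite subr0 => kb.
have -> : forcing s = invmx (X1 0) *m (X1 0 *m forcing s *m invmx (X2 0)) *m X2 0.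
  by rewrite !mulmxA mulVmx ?X1_unit // mul1mx mulmxKV ?X2_unit.
apply: le_trans (normr_mulmx_le (normr_mulmx_le (lexx _) kb) (lexx _)) _.
rewrite [leLHS](_ : _ = k%:R * (m%:R * `|invmx (X1 0)| * kernel_const) * `|X2 0|
  * expR (- a * s)) //.
by rewrite /kernel_const; ring.
Qed.

Variable Phi : R -> 'M[R]_(m, k).
Hypothesis Phi_derive : forall x : R, 0 <= x -> is_derive x 1 Phi (forcing x).

Lemma sylvester_antiderivative_cvg : cvg (Phi @ +oo).
Proof.
have [C FC] := sylvester_forcing_decay.
have C0 : 0 <= C.
  by have := le_trans (normr_ge0 _) (FC 0 (lexx 0)); rewrite mulr0 expR0 mulr1.
have tail T0 T : 0 <= T0 -> T0 <= T -> `|Phi T - Phi T0| <= C * expR (- a * T0) / a.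
  move=> T00 T0T; apply: (increment_le_exp_decay_mx (df := forcing)) => //.
  - by rewrite mulr_ge0 ?expR_ge0.
  - by move=> x T0x _; apply: Phi_derive; exact: le_trans T0x.
  move=> x T0x _; apply: le_trans (FC x (le_trans T00 T0x)) _.
  by rewrite -mulrA -expRD -mulrDr addrC subrK.
apply/cauchy_cvgP; apply/cauchyP => eps e0.
have [T0 [T00 T0eps]] := exp_decay_lt (divr_ge0 C0 (ltW a_gt0)) e0 a_gt0.
exists (Phi T0), T0; split; first exact: num_real.
move=> T /ltW T0T; rewrite -ball_normE /ball_ /= distrC.
by apply: le_lt_trans (tail T0 T T00 T0T) _; rewrite mulrAC.
Qed.

Variable L : 'M[R]_(m, k).
Hypothesis Phi_cvg : Phi @ +oo --> L.

Let H t := X1 t *m (Phi t - L) *m invmx (X2 t).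

Lemma sylvester_solution_continuous : {within J, continuous H}.
Proof.
have [X1c [_ _]] := X1_fund; have [X2c [_ _]] := X2_fund.
apply: continuous_within_mulmx.
  apply: continuous_within_mulmx X1c _; apply: continuous_within_add.
    by apply: derivable_continuous_J => x x0; case: (Phi_derive x0).
  exact: continuous_within_cst.
by apply: continuous_within_invmx X2c => t; rewrite JhalfE; exact: X2_unit.
Qed.

Lemma sylvester_solution_derive (t : R) : 0 < t ->
  is_derive t 1 H (B11 t *m H t + B12 t - H t *m B22 t).
Proof.
move=> t0; have [_ [X1d _]] := X1_fund; have [_ [X2d _]] := X2_fund.
have u1 := X1_unit (ltW t0); have u2 := X2_unit (ltW t0).
have PhiLd : is_derive t 1 (fun x => Phi x - L) (forcing t).
  by have := is_deriveB (Phi_derive (ltW t0)) (is_derive_cst L t 1); rewrite subr0.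
apply: is_derive_eq.
  exact: is_derive_mulmx (is_derive_mulmx (X1d t t0) PhiLd) (is_derive_invmx u2 (X2d t t0)).
by rewrite /H /forcing mulmxDl mulmxN !mulmxA (mulmxV u1) mul1mx !(mulmxK u2).
Qed.

Lemma sylvester_solution_bounded (t : R) : 0 <= t -> `|H t| <= kernel_const / a.
Proof.
move=> t0; pose psi T := X1 t *m Phi T *m invmx (X2 t).
have psi_bound T : t <= T -> `|psi T - psi t| <= kernel_const / a.
  move=> tT; pose dpsi x := X1 t *m forcing x *m invmx (X2 t).
  apply: (increment_le_exp_decay_mx (df := dpsi)) => //.
    move=> x tx _; apply: is_derive_eq.
      apply: is_derive_mulmx (is_derive_mulmx (is_derive_cst (X1 t) x 1) _)
        (is_derive_cst (invmx (X2 t)) x 1).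
      exact: Phi_derive (le_trans t0 tx).
    by rewrite mul0mx add0r mulmx0 addr0.
  by move=> x tx _; exact: sylvester_kernel_decay.
have psi_cvg : `|psi T - psi t| @[T --> +oo] --> `|X1 t *m L *m invmx (X2 t) - psi t|.
  apply: cvg_norm; apply: cvgB (cvg_cst _).
  by apply: cvg_mulmx (cvg_cst _); exact: cvg_mulmx (cvg_cst _) Phi_cvg.
have bounded : closed [set x : R | x <= kernel_const / a] by exact: closed_le.
have near_bound : \forall T \near +oo, `|psi T - psi t| <= kernel_const / a.
  by apply: filterS (nbhs_pinfty_ge (num_real t)) => T; exact: psi_bound.
have := closed_cvg _ bounded near_bound _ psi_cvg.
by rewrite -normrN opprB /psi -mulmxBl -mulmxBr; exact.
Qed.

End BoundedSylvesterSolution.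

Lemma bounded_sylvester_solution (R : realType) m k (B11 : R -> 'M[R]_m)
    (B12 : R -> 'M[R]_(m, k)) (B22 : R -> 'M[R]_k) :
  {within Jhalf R, continuous B12} -> unif_bounded_on_J B12 ->
  exp_dichotomy B11 0 -> exp_dichotomy B22 1%:M ->
  exists H : R -> 'M[R]_(m, k), [/\ {within Jhalf R, continuous H},
    forall t : R, 0 < t -> is_derive t 1 H (B11 t *m H t + B12 t - H t *m B22 t) &
    unif_bounded_on_J H].
Proof.
move=> B12c [M12 B12M] /exp_dichotomy0_decay[K1 [a [X1 [a0 X1f X1d]]]].
move=> /exp_dichotomy1_bounded[K2 [X2 [X2f X2b]]].
have [Phi Phid] := continuous_J_antiderivative_mx
  (sylvester_forcing_continuous B12c X1f X2f).
have /cvg_ex[L PhiL] := sylvester_antiderivative_cvg a0 B12M X1f X2f X1d X2b Phid.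
exists (fun t => X1 t *m (Phi t - L) *m invmx (X2 t)); split.
- exact: (sylvester_solution_continuous X1f X2f Phid (L := L)).
- by move=> t t0; have := sylvester_solution_derive X1f X2f Phid L t0.
- exists (k%:R * (m%:R * K1 * M12) * K2 / a) => t t0.
  by have := sylvester_solution_bounded a0 B12M X1d X2b Phid PhiL t0.
Qed.

Theorem proposition3 (R : realType) (m k : nat)
  (B11 : R -> 'M[R]_m) (B12 : R -> 'M[R]_(m, k)) (B22 : R -> 'M[R]_k) :
  (0 < m)%N -> (0 < k)%N ->
  {within Jhalf R, continuous B11} ->
  {within Jhalf R, continuous B12} ->
  {within Jhalf R, continuous B22} ->
  unif_bounded_on_J B11 -> unif_bounded_on_J B12 -> unif_bounded_on_J B22 ->
  exp_dichotomy B11 0 ->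
  exp_dichotomy B22 1%:M ->
  let B : R -> 'M[R]_(m + k) := fun t => block_mx (B11 t) (B12 t) 0 (B22 t) in
  exp_dichotomy B (block_mx 0 0 0 1%:M) /\
  exists (S dS : R -> 'M[R]_(m + k)) (D1 : R -> 'M[R]_m) (D2 : R -> 'M[R]_k),
    lyapunov_transf S dS /\
    (forall t : R, 0 <= t ->
       transformed_coef B S dS t = block_mx (D1 t) 0 0 (D2 t)) /\
    (forall t : R, 0 <= t -> D1 t = B11 t).
Proof.
move=> _ _ B11c B12c B22c B11b B12b B22b dich1 dich2 B.
have [H [Hc Hd Hb]] := bounded_sylvester_solution B12c B12b dich1 dich2.
pose dH t := B11 t *m H t + B12 t - H t *m B22 t.
have dHc : {within Jhalf R, continuous dH}.
  apply: continuous_within_add.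
    exact: continuous_within_add (continuous_within_mulmx _ _) _.
  exact/continuous_within_opp/continuous_within_mulmx.
have dHb : unif_bounded_on_J dH.
  apply: unif_bounded_add; first exact: unif_bounded_add (unif_bounded_mulmx _ _) _.
  exact/unif_bounded_opp/unif_bounded_mulmx.
pose S t : 'M[R]_(m + k) := block_mx 1%:M (H t) 0 1%:M.
pose dS t : 'M[R]_(m + k) := block_mx 0 (dH t) 0 0.
have SL : lyapunov_transf S dS := lyapunov_transf_unitriangular Hc dHc Hd Hb dHb.
have SB t : 0 <= t -> transformed_coef B S dS t = block_mx (B11 t) 0 0 (B22 t).
  by move=> _; exact: unitriangular_conj.
split; last by exists S, dS, B11, B22.
exact: exp_dichotomy_transform SL SB (exp_dichotomy_block_diag dich1 dich2).
Qed.
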